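(* Every effective Bonnet Myers sharp graph is reflective. That is: if $G=(V,E)$ is a finite, simple, connected graph with $K:=\min_{x\sim y}\kappa(x,y)>0$ and $\operatorname{diam}_{\operatorname{eff}}(G)=\frac{\max_v\operatorname{Deg}(v)}{K}$, then $G$ is reflective.
   Context: $d$ is the combinatorial distance, $\operatorname{Deg}$ the degree, $\operatorname{diam}_{\operatorname{eff}}(G)=\frac{1}{|V|^2}\sum_{x,y}d(x,y)$. Laplacian $\Delta f(x)=\sum_{y\sim x}(f(y)-f(x))$. Ollivier curvature: $\kappa(x,y)=\inf\{\Delta f(x)-\Delta f(y): f(y)-f(x)=1,\ \max_{u\sim v}|f(u)-f(v)|=1\}$. For adjacent $x\sim y$ let $V_x^y=\{v: d(v,x)<d(v,y)\}$, $V^{xy}=\{v:d(v,x)=d(v,y)\}$. A reflection from $x$ to $y$ is a graph automorphism $\phi$ with $\phi\circ\phi=\mathrm{id}$, $\phi(x)=y$, such that the edges between $V_x^y$ and $V_y^x$ are exactly $\{\{x',\phi(x')\}:x'\in V_x^y\}$ and $\phi$ fixes $V^{xy}$ pointwise. $G$ is reflective if every edge admits a reflection. *)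

From HB Require Import structures.
From mathcomp Require Import all_boot all_order all_algebra.
From mathcomp Require Import classical_sets reals.
Set Implicit Arguments. Unset Strict Implicit. Unset Printing Implicit Defensive.
Import Order.TTheory GRing.Theory Num.Theory.
Local Open Scope ring_scope.

Section Graph.
Variable T : finType.
Variable e : rel T.

Definition simple_graph := symmetric e /\ irreflexive e.
Definition connected_graph := forall x y : T, connect e x y.

Fixpoint walk_of_len (n : nat) (x y : T) : bool :=
  if n is n'.+1 then [exists z, e x z && walk_of_len n' z y] else x == y.

(* combinatorial distance: least n with a walk of length n (shortest walks
   have length < #|T| in a connected graph; value #|T| if unreachable) *)
Definition dist (x y : T) : nat := find (fun n => walk_of_len n x y) (iota 0 #|T|).

Definition Deg (x : T) : nat := #|[set y | e x y]|.
Definition maxDeg : nat := \max_(v : T) Deg v.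

Variable R : realType.

Definition diam_eff : R :=
  (\sum_(x : T) \sum_(y : T) (dist x y)%:R) / (#|T|%:R ^+ 2).

Definition lap (f : T -> R) (x : T) : R := \sum_(y : T | e x y) (f y - f x).

Definition ollivier (x y : T) : R :=
  inf [set lap f x - lap f y | f in
        [set f : T -> R | (f y - f x = 1) /\
           (forall u v, e u v -> `|f u - f v| <= 1) /\
           (exists u v, e u v /\ `|f u - f v| = 1)]].

Definition minCurv : R := inf [set ollivier xy.1 xy.2 | xy in [set xy : T * T | e xy.1 xy.2]].

Definition Vside (x y : T) : {set T} := [set v | dist v x < dist v y]%N.
Definition Vmid (x y : T) : {set T} := [set v | dist v x == dist v y].

Definition is_reflection (x y : T) (phi : T -> T) : Prop :=
  (forall u v, e (phi u) (phi v) = e u v) /\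
  (forall u, phi (phi u) = u) /\
  phi x = y /\
  (forall u v, u \in Vside x y -> v \in Vside y x -> e u v -> v = phi u) /\
  (forall u, u \in Vside x y -> (phi u \in Vside y x) && e u (phi u)) /\
  (forall v, v \in Vmid x y -> phi v = v).

Definition reflective : Prop :=
  forall x y, e x y -> exists phi : T -> T, is_reflection x y phi.

End Graph.

From HB Require Import structures.
From mathcomp Require Import all_boot all_order all_algebra.
From mathcomp Require Import classical_sets reals.
From mathcomp Require Import ring lra zify.
Import Order.TTheory GRing.Theory Num.Theory.
Set Implicit Arguments. Unset Strict Implicit. Unset Printing Implicit Defensive.

(* Write Δ for the Laplacian, K for the minimal curvature and D for the maximal
   degree. For a 1-Lipschitz f increasing by 1 along an edge a ~ b, the
   definition of the curvature gives K <= Δf(a) - Δf(b). Applied to d(., w)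
   along a geodesic this yields K d(a, w) <= Deg w - Δd(., w)(a); summing over a
   and w (a Laplacian sums to 0), the effective-diameter hypothesis forces
   equality everywhere: Δd(., w)(a) = D - K d(a, w).
   Fix an edge x ~ y. As d(., x) - d(., y) = 1_{V_y^x} - 1_{V_x^y}, on V_x^y the
   Laplacians of the two indicators differ by K; the curvature bound for the
   max and the min of d(., x) and d(., y), propagated along geodesics to x,
   shows that every vertex of V_x^y has exactly one neighbour in V_y^x. The
   reflection exchanges these matched pairs and fixes V^{xy}; two more curvature
   estimates, for a 0/1 test function and for the distance to a set truncated
   at 2, show that it preserves adjacency. *)

Section Distance.
Variables (T : finType) (e : rel T).

Lemma walk_of_len_rcons n a b c :
  walk_of_len e n a b -> e b c -> walk_of_len e n.+1 a c.
Proof.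
elim: n a => [|n IHn] a /=.
  by move/eqP=> -> ebc; apply/existsP; exists c; rewrite ebc eqxx.
by case/existsP=> z /andP[eaz wz] ebc; apply/existsP; exists z; rewrite eaz; apply: IHn.
Qed.

Lemma walk_of_len_path a p : path e a p -> walk_of_len e (size p) a (last a p).
Proof.
elim: p a => [|z p IHp] a //= /andP[eaz pz].
by apply/existsP; exists z; rewrite eaz IHp.
Qed.

Lemma dist_le_walk n a b : walk_of_len e n a b -> (dist e a b <= n)%N.
Proof.
move=> w; have [ltnT|geTn] := ltnP n #|T|.
  by rewrite leqNgt; apply/negP => /(before_find 0); rewrite nth_iota // add0n w.
have := find_size (fun n => walk_of_len e n a b) (iota 0 #|T|).
by rewrite size_iota => /leq_trans; apply.
Qed.

Lemma dist_xx a : dist e a a = 0%N.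
Proof. by apply/eqP; rewrite -leqn0; apply: dist_le_walk => /=. Qed.

Hypothesis conn : connected_graph e.

Lemma dist_walk a b : walk_of_len e (dist e a b) a b.
Proof.
have /connectP[p pp ->] := conn a b.
have [q pq uq _] := shortenP pp.
have qT : (size q < #|T|)%N.
  by have := max_card (mem (a :: q)); rewrite (card_uniqP uq).
have hasw : has (fun n => walk_of_len e n a (last a q)) (iota 0 #|T|).
  by apply/hasP; exists (size q); rewrite ?mem_iota ?walk_of_len_path.
have := nth_find 0 hasw; rewrite nth_iota //.
by move: hasw; rewrite has_find size_iota.
Qed.

Lemma dist_eq0 a b : dist e a b = 0%N -> a = b.
Proof. by move=> d0; have := dist_walk a b; rewrite d0 => /eqP. Qed.

Lemma dist_edgeL a b w : e a b -> (dist e a w <= (dist e b w).+1)%N.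
Proof.
by move=> eab; apply: dist_le_walk; apply/existsP; exists b; rewrite eab; apply: dist_walk.
Qed.

Lemma dist_edgeR a x y : e x y -> (dist e a y <= (dist e a x).+1)%N.
Proof. by move=> exy; apply/dist_le_walk/(walk_of_len_rcons (dist_walk a x)). Qed.

Lemma dist_edge a b : irreflexive e -> e a b -> dist e a b = 1%N.
Proof.
move=> irr_e eab; apply/eqP; rewrite eqn_leq; apply/andP; split.
  by apply: dist_le_walk; apply/existsP; exists b; rewrite eab eqxx.
by rewrite lt0n; apply: contraTneq eab => /dist_eq0 ->; rewrite irr_e.
Qed.

Lemma dist_geodesic_step a w n : dist e a w = n.+1 ->
  exists2 b, e a b & dist e b w = n.
Proof.
move=> daw; have := dist_walk a w; rewrite daw => /existsP[b /andP[eab wb]].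
exists b => //; apply/eqP; rewrite eqn_leq dist_le_walk //=.
by have := dist_edgeL w eab; rewrite daw.
Qed.

End Distance.

Section Sides.
Variables (T : finType) (e : rel T).

Lemma Vside_trichotomy x y z :
  [\/ z \in Vside e x y, z \in Vside e y x | z \in Vmid e x y].
Proof. by rewrite !inE; case: ltngtP => _; [apply: Or31 | apply: Or32 | apply: Or33]. Qed.

Lemma Vside_opp x y z : z \in Vside e x y -> z \notin Vside e y x.
Proof. by rewrite !inE -leqNgt => /ltnW. Qed.

Lemma Vside_mid x y z : z \in Vside e x y -> z \notin Vmid e x y.
Proof. by rewrite !inE => /ltn_eqF ->. Qed.

Lemma Vmid_sym x y : Vmid e y x = Vmid e x y.
Proof. by apply/setP => z; rewrite !inE eq_sym. Qed.

(* Exchange a vertex of V_x^y or V_y^x with a neighbour on the other side (it is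
   unique under the hypotheses of [opp_nbrs_Vside]); fix V^{xy}. *)
Definition mirror x y u : T :=
  odflt u [pick z | e u z && ((u \in Vside e x y) && (z \in Vside e y x)
                             || (u \in Vside e y x) && (z \in Vside e x y))].

Lemma mirror_sym x y : mirror y x =1 mirror x y.
Proof. by move=> u; rewrite /mirror (eq_pick (fun z => congr1 _ (orbC _ _))). Qed.

Lemma mirror_mid x y u : u \in Vmid e x y -> mirror x y u = u.
Proof.
move=> uM; rewrite /mirror; case: pickP => // z /andP[_].
by rewrite !inE; move: uM; rewrite inE => /eqP ->; rewrite ltnn.
Qed.

Definition closed_nbhd (A : {set T}) : {set T} :=
  [set t | [exists s in A, (t == s) || e t s]].

(* [nbhd_level A t] is [minn (dist t A) 2]. *)
Definition nbhd_level (A : {set T}) t : nat := (t \notin A) + (t \notin closed_nbhd A).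

Lemma closed_nbhd_self (A : {set T}) t : t \in A -> t \in closed_nbhd A.
Proof. by move=> tA; rewrite inE; apply/exists_inP; exists t; rewrite ?eqxx. Qed.

Lemma closed_nbhd_edge (A : {set T}) t s : e t s -> s \in A -> t \in closed_nbhd A.
Proof. by move=> ets sA; rewrite inE; apply/exists_inP; exists s; rewrite ?ets ?orbT. Qed.

Lemma nbhd_level_lipschitz (A : {set T}) a c :
  e a c -> (nbhd_level A a <= (nbhd_level A c).+1)%N.
Proof.
move=> eac; rewrite /nbhd_level; case: (boolP (a \in closed_nbhd A)) => [|aN].
  by case: (_ \in A); case: (_ \in A); case: (_ \in closed_nbhd A).
have cA : c \notin A by apply: contra aN; apply: closed_nbhd_edge.
by rewrite cA (contra (@closed_nbhd_self A a) aN).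
Qed.

End Sides.

Local Open Scope ring_scope.

Section Laplacian.
Variables (R : realType) (T : finType) (e : rel T).

Definition distR (w : T) : T -> R := fun z => (dist e z w)%:R.
Definition indicator (A : {set T}) : T -> R := fun z => (z \in A)%:R.

Definition curv_lb (K : R) := forall a b (f : T -> R), e a b -> f b - f a = 1 ->
  (forall u v, e u v -> `|f u - f v| <= 1) -> K <= lap e f a - lap e f b.

Lemma lap_eq (f g : T -> R) : f =1 g -> lap e f =1 lap e g.
Proof. by move=> fg u; apply: eq_bigr => z _; rewrite !fg. Qed.

Lemma lap_eq_nbhd (f g : T -> R) u :
  (forall z, e u z -> f z - f u = g z - g u) -> lap e f u = lap e g u.
Proof. exact: eq_bigr. Qed.

Lemma lapD (f g : T -> R) u : lap e (fun z => f z + g z) u = lap e f u + lap e g u.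
Proof. by rewrite /lap -big_split /=; apply: eq_bigr => z _; ring. Qed.

Lemma lapB (f g : T -> R) u : lap e (fun z => f z - g z) u = lap e f u - lap e g u.
Proof. by rewrite /lap -sumrB; apply: eq_bigr => z _; ring. Qed.

Lemma sum_lap (f : T -> R) : symmetric e -> \sum_u lap e f u = 0.
Proof.
move=> sym_e; rewrite /lap; under eq_bigr do rewrite sumrB.
rewrite sumrB (exchange_big_dep xpredT) //=; apply/eqP; rewrite subr_eq0; apply/eqP.
by apply: eq_bigr => z _; apply: eq_bigl => u; rewrite sym_e.
Qed.

Lemma lap_indicator_out (A : {set T}) u : u \notin A ->
  lap e (indicator A) u = #|[set z | e u z & z \in A]|%:R.
Proof.
move=> uA; rewrite /lap /indicator (negbTE uA) cardsE -sum1_card natr_sum big_mkcondr /=.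
by apply: eq_bigr => z _; rewrite subr0; case: (z \in A).
Qed.

Lemma lap_indicatorC (A : {set T}) u :
  lap e (indicator (~: A)) u = - lap e (indicator A) u.
Proof.
rewrite /lap -sumrN; apply: eq_bigr => z _; rewrite /indicator !inE.
by case: (z \in A); case: (u \in A); rewrite /=; ring.
Qed.

Lemma lap_distR_xx w : symmetric e -> irreflexive e -> connected_graph e ->
  lap e (distR w) w = (Deg e w)%:R.
Proof.
move=> sym_e irr_e conn; rewrite /lap /distR dist_xx /Deg cardsE -sum1_card natr_sum.
by apply: eq_bigr => z ewz; rewrite (dist_edge conn irr_e) ?subr0 // sym_e.
Qed.

Lemma minCurv_le_ollivier a b : e a b -> minCurv e R <= ollivier e R a b.
Proof.
move=> eab; apply: ge_inf; last by exists (a, b).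
exists (- \sum_(p : T * T) `|ollivier e R p.1 p.2|) => _ [p _ <-].
rewrite lerNl (le_trans (ler_norm _)) // normrN.
by rewrite (bigD1 p) //= lerDl sumr_ge0.
Qed.

Lemma ollivier_le_lap a b (f : T -> R) : e a b -> f b - f a = 1 ->
  (forall u v, e u v -> `|f u - f v| <= 1) -> ollivier e R a b <= lap e f a - lap e f b.
Proof.
move=> eab fab lipf; apply: ge_inf; last first.
  exists f => //; split=> //; split=> //; exists a, b; split=> //.
  by rewrite distrC fab normr1.
exists (- (\sum_(z | e a z) (1 : R) + \sum_(z | e b z) 1)) => _ [g [_ [lipg _]] <-].
have lapga : - \sum_(z | e a z) (1 : R) <= lap e g a.
  rewrite -sumrN; apply: ler_sum => z eaz.
  by have := lipg a z eaz; rewrite ler_norml => /andP[]; lra.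
have lapgb : lap e g b <= \sum_(z | e b z) (1 : R).
  apply: ler_sum => z ebz.
  by have := lipg b z ebz; rewrite ler_norml => /andP[]; lra.
lra.
Qed.

Lemma curv_lb_minCurv : curv_lb (minCurv e R).
Proof.
move=> a b f eab fab lipf.
exact: le_trans (minCurv_le_ollivier eab) (ollivier_le_lap eab fab lipf).
Qed.

End Laplacian.

Arguments distR {R T} e w _.
Arguments indicator {R T} A _.
Arguments lap_indicator_out {R T} e {A u}.
Arguments lap_indicatorC {R T} e A u.
Arguments lap_distR_xx {R T e} w.

Section Sharpness.
Variables (R : realType) (T : finType) (e : rel T).
Hypotheses (sym_e : symmetric e) (irr_e : irreflexive e) (conn : connected_graph e).
Variable K : R.
Hypothesis curvK : curv_lb e K.

Lemma curv_lb_nat (F : T -> nat) a b :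
  (forall u v, e u v -> F u <= (F v).+1)%N -> e a b -> F b = (F a).+1 ->
  K <= lap e (fun z => (F z)%:R) a - lap e (fun z => (F z)%:R) b.
Proof.
move=> lipF eab Fab; apply: curvK => // [|u v euv]; first by rewrite /= Fab -natr1; ring.
have lipR x y : e x y -> (F x)%:R <= (F y)%:R + 1 :> R by rewrite natr1 ler_nat => /lipF.
have evu : e v u by rewrite sym_e.
by rewrite ler_norml; have := lipR u v euv; have := lipR v u evu; lra.
Qed.

Lemma curv_lb_01 (f : T -> R) a b : (forall z, 0 <= f z <= 1) ->
  e a b -> f a = 0 -> f b = 1 -> K <= lap e f a - lap e f b.
Proof.
move=> f01 eab fa fb; apply: curvK => // [|u v _]; first by rewrite fa fb subr0.
by rewrite ler_norml; move: (f01 u) (f01 v) => /andP[? ?] /andP[? ?]; apply/andP; split; lra.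
Qed.

Lemma lap_distR_lb a w : K * (dist e a w)%:R <= (Deg e w)%:R - lap e (distR e w) a.
Proof.
move: {2}(dist e a w) (erefl (dist e a w)) => n; elim: n a => [|n IHn] a daw.
  by rewrite daw mulr0 (dist_eq0 conn daw) lap_distR_xx // subrr.
have [b eab dbw] := dist_geodesic_step conn daw.
have IHb := IHn b dbw; rewrite dbw /distR in IHb.
have eba : e b a by rewrite sym_e.
have dab : dist e a w = (dist e b w).+1 by rewrite daw dbw.
have := curv_lb_nat (fun u v => dist_edgeL conn w (a := u) (b := v)) eba dab.
by rewrite daw -natr1 mulrDr mulr1 /distR; lra.
Qed.

Lemma lap_distR_sharp (D : R) a w : (forall v, (Deg e v)%:R <= D) ->
  K * (\sum_x \sum_y (dist e x y)%:R) = #|T|%:R ^+ 2 * D ->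
  lap e (distR e w) a = D - K * (dist e a w)%:R.
Proof.
move=> DegD sum_dist; set N : R := #|T|%:R.
have N_gt0 : 0 < N by rewrite ltr0n; apply/card_gt0P; exists a.
pose slack a w := (Deg e w)%:R - lap e (distR e w) a - K * (dist e a w)%:R.
have slack_ge0 b v : 0 <= slack b v by rewrite /slack; have := lap_distR_lb b v; lra.
have sum_slack v : \sum_b slack b v = N * (Deg e v)%:R - K * \sum_b (dist e b v)%:R.
  by rewrite /slack !sumrB sum_lap // sumr_const -mulr_sumr mulr_natr; ring.
(* Summed over all pairs, the sharpness hypothesis makes the total slack vanish. *)
have total : \sum_v (N * (D - (Deg e v)%:R) + \sum_b slack b v) = 0.
  under eq_bigr do rewrite sum_slack.
  rewrite (eq_bigr (fun v => N * D - K * \sum_b (dist e b v)%:R)) => [|v _]; last by ring.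
  by rewrite sumrB sumr_const -mulr_sumr exchange_big /= sum_dist -mulr_natr /N; ring.
have slack_sum_ge0 v : 0 <= \sum_b slack b v by apply: sumr_ge0.
have term_ge0 v : 0 <= N * (D - (Deg e v)%:R) + \sum_b slack b v.
  by rewrite addr_ge0 // mulr_ge0 ?subr_ge0 // ltW.
have term0 := psumr_eq0P (fun v _ => term_ge0 v) total (i := w) isT.
have Deg_le := DegD w; have slack_w_ge0 := slack_sum_ge0 w.
have DegE : (Deg e w)%:R = D by nra.
have slack0 : \sum_b slack b w = 0 by nra.
have := psumr_eq0P (fun b _ => slack_ge0 b w) slack0 (i := a) isT.
by rewrite /slack DegE; lra.
Qed.

End Sharpness.

Section Reflection.
Variables (R : realType) (T : finType) (e : rel T).
Hypotheses (sym_e : symmetric e) (irr_e : irreflexive e) (conn : connected_graph e).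
Variables (K D : R).
Hypothesis curvK : curv_lb e K.
Hypothesis lap_distRE : forall a w, lap e (distR e w) a = D - K * (dist e a w)%:R.

Section Orientation.
Variables (x y : T).
Hypothesis exy : e x y.
Local Notation X := (Vside e x y).
Local Notation Y := (Vside e y x).

Let eyx : e y x. Proof. by rewrite sym_e. Qed.

Lemma dist_Vside z : z \in X -> dist e z y = (dist e z x).+1.
Proof. by rewrite inE => lt_xy; have := dist_edgeR conn z exy; lia. Qed.

Lemma x_in_Vside : x \in X.
Proof. by rewrite inE dist_xx (dist_edge conn irr_e exy). Qed.

Lemma distR_sub z : distR e x z - distR e y z = indicator Y z - indicator X z :> R.
Proof.
have := dist_edgeR conn z exy; have := dist_edgeR conn z eyx.
rewrite /distR /indicator !inE; case: ltngtP => [lt_yx|lt_xy|->] /= ? ?; last by ring.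
  have -> : dist e z x = (dist e z y).+1 by lia.
  by rewrite -natr1; ring.
have -> : dist e z y = (dist e z x).+1 by lia.
by rewrite -natr1; ring.
Qed.

Lemma natr_maxn_dist z :
  (maxn (dist e z x) (dist e z y))%:R = distR e y z + indicator Y z :> R.
Proof.
have := dist_edgeR conn z eyx; rewrite /distR /indicator inE.
case: ltnP => [lt_yx|le_xy] ?.
  have -> : dist e z x = (dist e z y).+1 by lia.
  by rewrite -natr1.
by rewrite addr0.
Qed.

Lemma natr_minn_dist z :
  (minn (dist e z x) (dist e z y))%:R = distR e y z - indicator X z :> R.
Proof.
have := dist_edgeR conn z exy; rewrite /distR /indicator inE.
case: ltnP => [lt_xy|le_yx] ?.
  have -> : dist e z y = (dist e z x).+1 by lia.
  by rewrite -natr1 addrK.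
by rewrite subr0.
Qed.

Lemma lap_indicator_Vside_diff u :
  u \in X -> lap e (indicator Y) u - lap e (indicator X) u = K.
Proof.
move=> uX; rewrite -lapB -(lap_eq e distR_sub) lapB !lap_distRE (dist_Vside uX) -natr1.
by ring.
Qed.

Lemma opp_nbrs_x : [set z | e x z & z \in Y] = [set y].
Proof.
apply/setP => z; rewrite !inE; apply/andP/eqP => [[exz]|->].
  have ezx : e z x by rewrite sym_e.
  by rewrite (dist_edge conn irr_e ezx) ltnS leqn0 => /eqP/(dist_eq0 conn).
by rewrite exy dist_xx (dist_edge conn irr_e eyx).
Qed.

Lemma lap_indicator_opp_step u b : u \in X -> b \in X -> e b u ->
  dist e u x = (dist e b x).+1 -> lap e (indicator Y) u = lap e (indicator Y) b :> R.
Proof.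
move=> uX bX ebu dux; have dyu := dist_Vside uX; have dyb := dist_Vside bX.
pose dmax z := maxn (dist e z x) (dist e z y); pose dmin z := minn (dist e z x) (dist e z y).
have lip_max v w : e v w -> (dmax v <= (dmax w).+1)%N.
  by rewrite /dmax => evw; have := dist_edgeL conn x evw; have := dist_edgeL conn y evw; lia.
have lip_min v w : e v w -> (dmin v <= (dmin w).+1)%N.
  by rewrite /dmin => evw; have := dist_edgeL conn x evw; have := dist_edgeL conn y evw; lia.
have dmax_ub : dmax u = (dmax b).+1 by rewrite /dmax; lia.
have dmin_ub : dmin u = (dmin b).+1 by rewrite /dmin; lia.
(* The bound for [dmax] gives [<=], the one for [dmin] gives [>=]. *)
have := curv_lb_nat sym_e curvK lip_max ebu dmax_ub.
have := curv_lb_nat sym_e curvK lip_min ebu dmin_ub.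
rewrite !(lap_eq e natr_maxn_dist) !(lap_eq e natr_minn_dist) !lapB !lapD !lap_distRE.
have := lap_indicator_Vside_diff uX; have := lap_indicator_Vside_diff bX.
by rewrite dyu dyb dux -!natr1; lra.
Qed.

Lemma lap_indicator_opp_Vside u : u \in X -> lap e (indicator Y) u = 1 :> R.
Proof.
move: {2}(dist e u x) (erefl (dist e u x)) => n; elim: n u => [|n IHn] u dux uX.
  rewrite (dist_eq0 conn dux) lap_indicator_out ?Vside_opp ?x_in_Vside //.
  by rewrite opp_nbrs_x cards1.
have [b eub dbx] := dist_geodesic_step conn dux.
have bX : b \in X.
  by rewrite inE dbx; have := dist_edgeL conn y eub; rewrite (dist_Vside uX) dux; lia.
have ebu : e b u by rewrite sym_e.
by rewrite (lap_indicator_opp_step uX bX ebu) ?IHn // dux dbx.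
Qed.

Lemma lap_indicator_Vside u : u \in X -> lap e (indicator X) u = 1 - K :> R.
Proof.
by move=> uX; have := lap_indicator_Vside_diff uX; rewrite lap_indicator_opp_Vside //; lra.
Qed.

Lemma opp_nbrs_Vside u : u \in X -> [set z | e u z & z \in Y] = [set mirror e x y u].
Proof.
move=> uX; have := lap_indicator_opp_Vside uX.
rewrite lap_indicator_out ?Vside_opp // => /eqP; rewrite pnatr_eq1 => /cards1P[z0 Nu].
rewrite Nu /mirror uX (negbTE (Vside_opp uX)); congr [set _].
case: pickP => [z /andP[euz] /= | none].
  rewrite orbF => zY; have : z \in [set z0] by rewrite -Nu inE euz.
  by move/set1P.
by have := none z0; have := set11 z0; rewrite -Nu inE => /andP[-> ->].
Qed.

Lemma mirror_Vside_edge u : u \in X -> e u (mirror e x y u) && (mirror e x y u \in Y).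
Proof. by move=> uX; have := set11 (mirror e x y u); rewrite -opp_nbrs_Vside // inE. Qed.

Lemma mirror_Vside_unique u z : u \in X -> e u z -> z \in Y -> z = mirror e x y u.
Proof. by move=> uX euz zY; apply/set1P; rewrite -opp_nbrs_Vside // inE euz. Qed.

End Orientation.

Section Matching.
Variables (x y : T).
Hypothesis exy : e x y.
Local Notation X := (Vside e x y).
Local Notation Y := (Vside e y x).
Local Notation M := (Vmid e x y).

Let eyx : e y x. Proof. by rewrite sym_e. Qed.

Lemma mirror_invol_Vside u : u \in X -> mirror e x y (mirror e x y u) = u.
Proof.
move=> uX; have /andP[eum umY] := mirror_Vside_edge exy uX.
by rewrite -mirror_sym; apply/esym/(mirror_Vside_unique eyx umY); rewrite // sym_e.
Qed.

Lemma mirror_edge_mid u m : u \in X -> m \in M -> e u m -> e (mirror e x y u) m.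
Proof.
move=> uX mM eum; set v := mirror e x y u.
have /andP[euv vY] : e u v && (v \in Y) := mirror_Vside_edge exy uX.
(* For the 0/1 function [f] below, the curvature bound along v ~ u leaves no room
   for a neighbour of u in B. *)
pose B := [set z in M | ~~ e v z].
have BX z : z \in B -> z \notin X.
  by rewrite inE => /andP[zM _]; apply: contraL zM; apply: Vside_mid.
pose f z := indicator X z + indicator B z : R.
have f01 z : 0 <= f z <= 1.
  rewrite /f /indicator; case: (boolP (z \in B)) => [/BX/negbTE -> | _]; rewrite /=.
    by rewrite add0r ler01 lexx.
  by rewrite addr0; case: (z \in X); rewrite /= ?lexx ?ler01.
have vB : v \notin B by rewrite inE -Vmid_sym (negbTE (Vside_mid vY)).
have uB : u \notin B by apply: contraL uX; apply: BX.
have evu : e v u by rewrite sym_e.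
have fv : f v = 0 by rewrite /f /indicator (negbTE (Vside_opp vY)) (negbTE vB) addr0.
have fu : f u = 1 by rewrite /f /indicator uX (negbTE uB) addr0.
have := curv_lb_01 curvK f01 evu fv fu.
rewrite !lapD (lap_indicator_opp_Vside eyx vY) (lap_indicator_Vside exy uX).
rewrite !lap_indicator_out //.
have -> : #|[set z | e v z & z \in B]| = 0%N.
  apply/eqP; rewrite cards_eq0; apply/eqP/setP => z.
  by rewrite !inE; case: (e v z); rewrite ?andbF.
move=> C; have : #|[set z | e u z & z \in B]| == 0%N by rewrite -(lern0 R); lra.
rewrite inE in mM; rewrite cards_eq0 => /eqP/setP/(_ m).
by rewrite !inE eum mM; case: (e v m).
Qed.

Lemma mirror_closed_nbhd u w : u \in X -> e u w ->
  w \in closed_nbhd e [set t in Y | (t == mirror e x y u) || e (mirror e x y u) t].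
Proof.
move=> uX euw; set u' := mirror e x y u; set S := [set t in Y | _].
(* S is the closed neighbourhood of u' in V_y^x; the curvature bound for
   [nbhd_level S] along u' ~ u pushes every neighbour of u into [closed_nbhd S]. *)
have /andP[euu' u'Y] : e u u' && (u' \in Y) := mirror_Vside_edge exy uX.
have eu'u : e u' u by rewrite sym_e.
have u'S : u' \in S by rewrite inE u'Y eqxx.
have uS : u \notin S by rewrite inE negb_and (Vside_opp uX).
have uN : u \in closed_nbhd e S := closed_nbhd_edge euu' u'S.
have lev : nbhd_level e S u = (nbhd_level e S u').+1.
  by rewrite /nbhd_level u'S (closed_nbhd_self e u'S) uS uN.
have lap_u' : lap e (fun z => (nbhd_level e S z)%:R) u' = - lap e (indicator Y) u' :> R.
  rewrite -lap_indicatorC; apply: lap_eq_nbhd => t eu't.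
  have etu' : e t u' by rewrite sym_e.
  rewrite /nbhd_level /indicator (closed_nbhd_edge etu' u'S) u'S (closed_nbhd_self e u'S).
  by rewrite !finset.in_setC u'Y [t \in S]inE eu't orbT andbT /= addn0.
have NuS : [set t | e u t & t \in S] = [set u'].
  apply/setP => t; rewrite finset.in_set1 finset.in_set [t \in S]finset.in_set.
  apply/andP/eqP => [[eut /andP[tY _]]|->].
    exact: (mirror_Vside_unique exy uX eut tY).
  by rewrite euu' u'Y eqxx.
have lap_u : lap e (fun z => (nbhd_level e S z)%:R) u =
    - 1 + #|[set t | e u t & t \in ~: closed_nbhd e S]|%:R :> R.
  have levE z : (nbhd_level e S z)%:R =
      indicator (~: S) z + indicator (~: closed_nbhd e S) z :> R.
    by rewrite /nbhd_level natrD /indicator !finset.in_setC.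
  rewrite (lap_eq e levE) lapD lap_indicatorC (lap_indicator_out e uS) NuS cards1.
  by rewrite lap_indicator_out // finset.in_setC uN.
have := curv_lb_nat sym_e curvK (nbhd_level_lipschitz S) eu'u lev.
rewrite lap_u' lap_u (lap_indicator_Vside eyx u'Y) => C.
have : #|[set t | e u t & t \in ~: closed_nbhd e S]| == 0%N by rewrite -(lern0 R); lra.
rewrite cards_eq0 => /eqP/setP/(_ w).
by rewrite finset.in_set finset.in_set0 finset.in_setC euw; case: (w \in closed_nbhd e S).
Qed.

Lemma mirror_edge_Vside u w : u \in X -> w \in X -> e u w ->
  e (mirror e x y u) (mirror e x y w).
Proof.
move=> uX wX euw; have /andP[euu' u'Y] := mirror_Vside_edge exy uX.
have := mirror_closed_nbhd uX euw; rewrite inE => /exists_inP[s].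
rewrite finset.in_set => /andP[sY /orP[/eqP su'|eu's]] /orP[/eqP ws|ews].
- by move: wX; rewrite ws => /Vside_opp; rewrite sY.
- have wu : w = u.
    rewrite -(mirror_invol_Vside uX) -mirror_sym.
    by apply: (mirror_Vside_unique eyx u'Y); rewrite -?su' // sym_e.
  by move: euw; rewrite wu irr_e.
- by move: wX; rewrite ws => /Vside_opp; rewrite sY.
- by rewrite -(mirror_Vside_unique exy wX ews sY).
Qed.

End Matching.

Lemma mirror_invol x y : e x y -> involutive (mirror e x y).
Proof.
move=> exy u; have eyx : e y x by rewrite sym_e.
case: (Vside_trichotomy e x y u) => [uX|uY|uM]; first exact: mirror_invol_Vside.
  by rewrite -2!(mirror_sym e x y) mirror_invol_Vside.
by rewrite !mirror_mid.
Qed.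

Lemma mirror_edge_from_Vside x y u v : e x y -> u \in Vside e x y -> e u v ->
  e (mirror e x y u) (mirror e x y v).
Proof.
move=> exy uX euv; case: (Vside_trichotomy e x y v) => [vX|vY|vM].
- exact: mirror_edge_Vside.
- by have vE := mirror_Vside_unique exy uX euv vY; rewrite vE mirror_invol // -vE sym_e.
- by rewrite (mirror_mid vM) mirror_edge_mid.
Qed.

Lemma mirror_edge x y u v : e x y -> e u v -> e (mirror e x y u) (mirror e x y v).
Proof.
move=> exy euv; have eyx : e y x by rewrite sym_e.
have evu : e v u by rewrite sym_e.
case: (Vside_trichotomy e x y u) => [uX|uY|uM]; first exact: mirror_edge_from_Vside.
  by rewrite -!(mirror_sym e x y) mirror_edge_from_Vside.
rewrite (mirror_mid uM); case: (Vside_trichotomy e x y v) => [vX|vY|vM].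
- by rewrite sym_e -(mirror_mid uM) mirror_edge_from_Vside.
- by rewrite sym_e -(mirror_mid uM) -!(mirror_sym e x y) mirror_edge_from_Vside.
- by rewrite (mirror_mid vM).
Qed.

Lemma mirror_reflection x y : e x y -> is_reflection e x y (mirror e x y).
Proof.
move=> exy; have eyx : e y x by rewrite sym_e.
split.
  move=> u v; apply/idP/idP; last exact: mirror_edge.
  by move/(mirror_edge exy); rewrite !(mirror_invol exy).
split; first exact: mirror_invol.
split; first by rewrite -(mirror_Vside_unique exy (x_in_Vside exy) exy (x_in_Vside eyx)).
split; first by move=> u v uX vY euv; apply: mirror_Vside_unique.
split; last by move=> v; apply: mirror_mid.
by move=> u uX; rewrite andbC mirror_Vside_edge.
Qed.

End Reflection.

Unset Implicit Arguments.

Theorem theorem3p5 (R : realType) (T : finType) (e : rel T) :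
  simple_graph e -> connected_graph e ->
  0 < minCurv e R ->
  diam_eff e R = (maxDeg e)%:R / minCurv e R ->
  reflective e.
Proof.
move=> [sym_e irr_e] conn K_gt0 diamE x y exy.
set K := minCurv e R in K_gt0 diamE.
have curvK : curv_lb e K := @curv_lb_minCurv R T e.
have DegD w : (Deg e w)%:R <= (maxDeg e)%:R :> R by rewrite ler_nat; apply: leq_bigmax.
have sum_dist : K * (\sum_u \sum_v (dist e u v)%:R) = #|T|%:R ^+ 2 * (maxDeg e)%:R.
  have N2_neq0 : #|T|%:R ^+ 2 != 0 :> R.
    by rewrite expf_neq0 // pnatr_eq0 -lt0n; apply/card_gt0P; exists x.
  move/eqP: diamE; rewrite /diam_eff eqr_div ?(gt_eqF K_gt0) // => /eqP.
  by rewrite mulrC => ->; rewrite mulrC.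
have lap_distRE a w := lap_distR_sharp sym_e irr_e conn curvK a w DegD sum_dist.
exists (mirror e x y).
exact: (mirror_reflection sym_e irr_e conn curvK lap_distRE exy).
Qed.
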